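(* Let $\sigma$ be an optimal solution of a Bin Packing instance, let $b_1,\dots,b_r$ be the bins of $\sigma$ that contain small items and exactly one large item, in an arbitrary order, and let $L$ be the collection of the large items in these bins. Process $j=1,\dots,r$ and place into $b_j$ (which keeps its small items) the largest item of $L$ not yet placed into $b_1,\dots,b_{j-1}$ whose size plus the total size of the small items of $b_j$ is at most $T$. Then in each step such an item exists, and the resulting packing (all other bins unchanged) is a feasible, and hence optimal, solution.
   Context: Bin Packing: given a sequence of items with sizes in $\mathbb{Q}_{\ge 0}$ and a capacity $T$, a solution assigns the items to bins so that the total size in each bin is at most $T$; an optimal solution uses the minimum number of bins. A subsequence of items is 3-incompatible if no three distinct items of it have total size at most $T$; the large items form a largest 3-incompatible subsequence and the remaining items are small. *)

From HB Require Import structures.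
From mathcomp Require Import all_boot all_order all_algebra.
Set Implicit Arguments. Unset Strict Implicit. Unset Printing Implicit Defensive.
Import Order.TTheory GRing.Theory Num.Theory.
Local Open Scope ring_scope.

Definition load n (s : 'I_n -> rat) (B : {set 'I_n}) : rat := \sum_(i in B) s i.

Definition is_solution n (s : 'I_n -> rat) (T : rat) (P : {set {set 'I_n}}) : Prop :=
  partition P [set: 'I_n] /\ (forall B, B \in P -> load s B <= T).

Definition is_optimal n (s : 'I_n -> rat) (T : rat) (P : {set {set 'I_n}}) : Prop :=
  is_solution s T P /\ (forall P', is_solution s T P' -> (#|P| <= #|P'|)%N).

Definition three_incompatible n (s : 'I_n -> rat) (T : rat) (A : {set 'I_n}) : Prop :=
  forall i j k, i \in A -> j \in A -> k \in A ->
    i != j -> i != k -> j != k -> T < s i + s j + s k.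

(* Lg is a largest 3-incompatible set of items: the large items. *)
Definition is_large_set n (s : 'I_n -> rat) (T : rat) (Lg : {set 'I_n}) : Prop :=
  three_incompatible s T Lg /\
  (forall A, three_incompatible s T A -> (#|A| <= #|Lg|)%N).

Definition mixed_bin n (Lg : {set 'I_n}) (B : {set 'I_n}) : bool :=
  (#|B :&: Lg| == 1)%N && (B :\: Lg != set0).

Definition greedy_pick n (s : 'I_n -> rat) (T : rat) (Rem S : {set 'I_n}) (x : 'I_n) : Prop :=
  [/\ x \in Rem, load s S + s x <= T &
      forall y, y \in Rem -> load s S + s y <= T -> s y <= s x].

Fixpoint greedy_run n (s : 'I_n -> rat) (T : rat) (Lg Rem : {set 'I_n})
    (bs : seq {set 'I_n}) (xs : seq 'I_n) : Prop :=
  match bs, xs with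
  | _, [::] => True
  | B :: bs', x :: xs' =>
      greedy_pick s T Rem (B :\: Lg) x /\ greedy_run s T Lg (Rem :\ x) bs' xs'
  | [::], _ :: _ => False
  end.

Definition large_of_bins n (Lg : {set 'I_n}) (bs : seq {set 'I_n}) : {set 'I_n} :=
  \bigcup_(B <- bs) (B :&: Lg).

Definition repack n (P : {set {set 'I_n}}) (Lg : {set 'I_n})
    (bs : seq {set 'I_n}) (xs : seq 'I_n) : {set {set 'I_n}} :=
  (P :\: [set B in bs]) :|: [set p.2 |: (p.1 :\: Lg) | p in zip bs xs].

(* The large items originally in the bins b_1, ..., b_r form a matching: each
   fits into its own bin.  Such a matching of the bins still to be processed
   with the items not yet placed survives every greedy step: if the greedy
   choice x for b_j was matched to a later bin b_k, then b_k takes over the item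
   matched to b_j, which also fits into b_j and is therefore no larger than x.
   Hence a greedy choice always exists, and a complete run uses every item of L
   exactly once, so the refilled bins partition the same items and the number
   of bins does not grow. *)

From HB Require Import structures.
From mathcomp Require Import all_boot all_order all_algebra.
Import Order.TTheory GRing.Theory Num.Theory.
Local Open Scope ring_scope.

Set Implicit Arguments.
Unset Strict Implicit.
Unset Printing Implicit Defensive.

Section ZipMembership.
Variables S U : eqType.

Lemma mem_zip_swap (u : seq S) (v : seq U) a b :
  ((a, b) \in zip u v) = ((b, a) \in zip v u).
Proof. by elim: u v => [|x u IH] [|y v] //=; rewrite !in_cons IH !xpair_eqE andbC. Qed.

Lemma mem_zip (u : seq S) (v : seq U) a b :
  (a, b) \in zip u v -> a \in u /\ b \in v.
Proof.
elim: u v => [|x u IH] [|y v] //=; rewrite !in_cons.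
by case/orP => [/eqP[-> ->]|/IH[-> ->]]; rewrite ?eqxx ?orbT.
Qed.

Lemma zip_uniq_fst (u : seq S) (v : seq U) a b c :
  uniq u -> (a, b) \in zip u v -> (a, c) \in zip u v -> b = c.
Proof.
elim: u v => [|x u IH] [|y v] //= /andP[xNu uu]; rewrite !in_cons.
rewrite !xpair_eqE => /orP[/andP[/eqP-> /eqP->]|ab] /orP[/andP[/eqP ax /eqP->]|ac] //.
- by case: (mem_zip ac); rewrite (negbTE xNu).
- by case: (mem_zip ab); rewrite ax (negbTE xNu).
- exact: IH ab ac.
Qed.

Lemma zip_ex_fst (u : seq S) (v : seq U) a :
  size u = size v -> a \in u -> exists b, (a, b) \in zip u v.
Proof.
elim: u v => [|x u IH] [|y v] //= [/IH{}IH]; rewrite in_cons.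
case/predU1P => [->|/IH[b ab]]; first by exists y; rewrite mem_head.
by exists b; rewrite in_cons ab orbT.
Qed.

End ZipMembership.

Lemma zip_uniq_snd (S U : eqType) (u : seq S) (v : seq U) a b c :
  uniq v -> (a, c) \in zip u v -> (b, c) \in zip u v -> a = b.
Proof. by rewrite !(mem_zip_swap u); apply: zip_uniq_fst. Qed.

Lemma zip_ex_snd (S U : eqType) (u : seq S) (v : seq U) b :
  size u = size v -> b \in v -> exists a, (a, b) \in zip u v.
Proof.
move=> eq_uv /(zip_ex_fst (esym eq_uv))[a ba].
by exists a; rewrite mem_zip_swap.
Qed.

Lemma large_of_binsP n (Lg : {set 'I_n}) (bs : seq {set 'I_n}) i :
  reflect (exists2 B, B \in bs & i \in B :&: Lg) (i \in large_of_bins Lg bs).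
Proof. by rewrite /large_of_bins bigcup_seq; apply: (iffP bigcupP). Qed.

Section GreedyChoice.
Variables (n : nat) (s : 'I_n -> rat) (T : rat) (Lg : {set 'I_n}).

Definition fits (B : {set 'I_n}) (x : 'I_n) : bool := load s (B :\: Lg) + s x <= T.

Definition matching (Rem : {set 'I_n}) (bs : seq {set 'I_n}) (ms : seq 'I_n) : Prop :=
  [/\ uniq ms, {subset ms <= Rem} & all2 fits bs ms].

Lemma fitsE (B : {set 'I_n}) (x : 'I_n) :
  B :&: Lg = [set x] -> fits B x = (load s B <= T).
Proof. by move=> BL; rewrite /fits /load [in RHS](big_setID Lg) /= BL big_set1 addrC. Qed.

Lemma greedy_pick_exists (Rem B : {set 'I_n}) (y : 'I_n) :
  y \in Rem -> fits B y -> exists x, greedy_pick s T Rem (B :\: Lg) x.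
Proof.
move=> yR fy; pose fitting := [pred x | (x \in Rem) && fits B x].
have fitting_y : fitting y by rewrite /= yR.
have [x /andP[xR fx] x_max] := arg_maxP s fitting_y.
by exists x; split=> // z zR fz; apply: x_max; rewrite /= zR.
Qed.

Lemma matching_pick (Rem B : {set 'I_n}) (bs : seq {set 'I_n}) (x m : 'I_n) ms :
  greedy_pick s T Rem (B :\: Lg) x -> matching Rem (B :: bs) (m :: ms) ->
  matching (Rem :\ x) bs [seq if y == x then m else y | y <- ms].
Proof.
case=> _ _ x_max [/= /andP[mNms ums] sub_ms /andP[fm fms]].
have mR : m \in Rem by apply: sub_ms; rewrite mem_head.
have fits_swap C y : fits C y -> fits C (if y == x then m else y).
  case: eqP => [->|//]; apply: le_trans; rewrite lerD2l; exact: x_max.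
split.
- rewrite map_inj_in_uniq // => y z yms zms.
  case: ifPn => [/eqP->|_]; case: ifPn => [/eqP->|_] //.
    by move=> mz; rewrite mz zms in mNms.
  by move=> ym; rewrite -ym yms in mNms.
- move=> _ /mapP[y yms ->]; rewrite in_setD1.
  case: ifPn => [/eqP yx|-> /=]; last by apply: sub_ms; rewrite in_cons yms orbT.
  by rewrite mR andbT; apply: contraNneq mNms => ->; rewrite -yx.
- by elim: bs ms fms {mNms ums sub_ms} => [|C bs IH] [|y ms] //= /andP[/fits_swap-> /IH].
Qed.

Lemma greedy_run_extends (Rem : {set 'I_n}) (bs : seq {set 'I_n}) (ms xs : seq 'I_n) :
  matching Rem bs ms -> greedy_run s T Lg Rem bs xs -> (size xs < size bs)%N ->
  exists x, greedy_pick s T (Rem :\: [set y in xs]) (nth set0 bs (size xs) :\: Lg) x.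
Proof.
elim: xs Rem bs ms => [|x xs IH] Rem [|B bs] [|m ms] // M_ms; try by case: M_ms.
- case: M_ms => _ sub_ms /andP[fm _] _ _.
  have [y pick_y] := greedy_pick_exists (sub_ms m (mem_head _ _)) fm.
  by exists y; rewrite set_nil setD0.
- case=> pick_x run_xs; rewrite ltnS => lt_xs.
  have [y pick_y] := IH _ _ _ (matching_pick pick_x M_ms) run_xs lt_xs.
  by exists y; rewrite set_cons -setDDl.
Qed.

Lemma greedy_run_matching (Rem : {set 'I_n}) (bs : seq {set 'I_n}) (xs : seq 'I_n) :
  greedy_run s T Lg Rem bs xs -> size xs = size bs -> matching Rem bs xs.
Proof.
elim: bs xs Rem => [|B bs IH] [|x xs] Rem //=.
case=> [[xR fx _] /IH M_xs] [/M_xs[uxs sub_xs fxs]]; split=> /=.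
- by rewrite uxs andbT; apply/negP => /sub_xs; rewrite setD11.
- by move=> y; rewrite in_cons => /predU1P[->|/sub_xs/setD1P[]].
- exact/andP.
Qed.

End GreedyChoice.

Lemma coverU (U : finType) (P Q : {set {set U}}) : cover (P :|: Q) = cover P :|: cover Q.
Proof. exact: bigcup_setU. Qed.

Definition refill n (Lg : {set 'I_n}) (p : {set 'I_n} * 'I_n) : {set 'I_n} :=
  p.2 |: (p.1 :\: Lg).

Lemma mem_refill n (Lg B : {set 'I_n}) (x i : 'I_n) :
  x \in Lg -> (i \in refill Lg (B, x)) = (if i \in Lg then i == x else i \in B).
Proof.
rewrite /refill !inE /=; case: (eqVneq i x) => [->->|_] //=.
by case: (i \in Lg).
Qed.

Section Repack.
Variables (n : nat) (P : {set {set 'I_n}}) (D Lg : {set 'I_n}).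
Variables (bs : seq {set 'I_n}) (xs : seq 'I_n).
Hypotheses (partP : partition P D) (bsP : {subset bs <= P}) (ubs : uniq bs).
Hypotheses (uxs : uniq xs) (size_xs : size xs = size bs).
Hypothesis xs_large : [set x in xs] = large_of_bins Lg bs.

Let X := [set B in bs].
Let N := [set refill Lg p | p in zip bs xs].

Let repackE : repack P Lg bs xs = (P :\: X) :|: N.
Proof. by []. Qed.

Let XP : X \subset P.
Proof. by apply/subsetP => B; rewrite inE => /bsP. Qed.

Let mem_xs i : (i \in xs) = (i \in large_of_bins Lg bs).
Proof. by rewrite -xs_large inE. Qed.

Let xs_in_Lg x : x \in xs -> x \in Lg.
Proof. by rewrite mem_xs => /large_of_binsP[B _ /setIP[]]. Qed.

Lemma cover_refilled : cover N = cover X.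
Proof.
apply/setP => i; rewrite cover_imset; apply/bigcupP/bigcupP.
- case=> -[B x] Bx_bs; have [B_bs /xs_in_Lg xL] := mem_zip Bx_bs.
  rewrite mem_refill //; case: ifPn => [iL /eqP eq_ix | _ iB]; last first.
    by exists B; rewrite // inE.
  have : i \in xs by rewrite eq_ix (mem_zip Bx_bs).2.
  by rewrite mem_xs => /large_of_binsP[C C_bs /setIP[iC _]]; exists C; rewrite // inE.
- rewrite /X => -[B]; rewrite inE => B_bs iB; case: (boolP (i \in Lg)) => iL.
    have : i \in xs by rewrite mem_xs; apply/large_of_binsP; exists B; rewrite ?inE ?iB.
    case/(zip_ex_snd (esym size_xs)) => C Ci_bs.
    by exists (C, i) => //; rewrite mem_refill ?iL.
  have [x Bx_bs] := zip_ex_fst (esym size_xs) B_bs.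
  by exists (B, x) => //; rewrite mem_refill ?(negbTE iL) ?xs_in_Lg ?(mem_zip Bx_bs).2.
Qed.

Lemma trivIset_refilled : trivIset N.
Proof.
have trivP := partition_trivIset partP.
apply/trivIsetP => _ _ /imsetP[[B x] Bx_bs ->] /imsetP[[C y] Cy_bs ->] neq.
rewrite -setI_eq0; apply/negPn/negP => /set0Pn[i /setIP[]].
have [B_bs /xs_in_Lg xL] := mem_zip Bx_bs; have [C_bs /xs_in_Lg yL] := mem_zip Cy_bs.
rewrite !mem_refill //; case: ifP => _ => [/eqP eq_ix /eqP eq_iy | iB iC].
  have eq_xy : x = y by rewrite -eq_ix -eq_iy.
  rewrite -eq_xy in Cy_bs neq.
  by rewrite (zip_uniq_snd uxs Bx_bs Cy_bs) eqxx in neq.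
have eq_BC : B = C.
  by rewrite -(def_pblock trivP (bsP B_bs) iB) (def_pblock trivP (bsP C_bs) iC).
rewrite -eq_BC in Cy_bs neq.
by rewrite (zip_uniq_fst ubs Bx_bs Cy_bs) eqxx in neq.
Qed.

Lemma repack_partition : partition (repack P Lg bs xs) D.
Proof.
have [/eqP covP trivP P0] := and3P partP.
have P_split : X :|: (P :\: X) = P by rewrite -{2}(setID P X) (setIidPr XP).
have disj : [disjoint cover N & cover (P :\: X)].
  rewrite cover_refilled; apply: bigcup_disjoint => A /setDP[AP AX].
  rewrite disjoint_sym; apply: bigcup_disjoint => B BX.
  apply: (trivIsetP trivP) => //; first exact: (subsetP XP).
  by apply: contraNneq AX => ->.
rewrite repackE setUC; apply/and3P; split.
- by rewrite coverU cover_refilled -coverU P_split covP.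
- exact: trivIsetU trivIset_refilled (trivIsetD _ trivP) disj.
- rewrite in_setU in_setD (negbTE P0) andbF orbF.
  apply/imsetP => -[[B x] _ /setP/(_ x)].
  by rewrite !inE eqxx.
Qed.

Lemma repack_load (s : 'I_n -> rat) (T : rat) :
  (forall B, B \in P -> load s B <= T) -> all2 (fits s T Lg) bs xs ->
  forall C, C \in repack P Lg bs xs -> load s C <= T.
Proof.
move=> loadP fits_xs C; rewrite repackE.
case/setUP => [/setDP[CP _]|/imsetP[[B x] Bx_bs ->]]; first exact: loadP.
have xL := xs_in_Lg (mem_zip Bx_bs).2.
rewrite /load big_setU1 /= ?inE ?xL // addrC.
by move: fits_xs; rewrite all2E => /andP[_ /allP/(_ _ Bx_bs)].
Qed.

Lemma card_repack : (#|repack P Lg bs xs| <= #|P|)%N.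
Proof.
have card_X : #|X| = size bs by rewrite cardsE (card_uniqP ubs).
have card_N : (#|N| <= #|X|)%N.
  apply: leq_trans (leq_imset_card _ _) _; apply: leq_trans (card_size _) _.
  by rewrite size_zip size_xs minnn card_X.
rewrite repackE cardsU; apply: leq_trans (leq_subr _ _) _.
rewrite cardsD (setIidPr XP) -{2}(subnK (subset_leq_card XP)).
by rewrite leq_add2l.
Qed.

End Repack.

Lemma card_large_of_bins n (Lg : {set 'I_n}) (bs : seq {set 'I_n}) :
  {in bs, forall B, #|B :&: Lg| <= 1}%N -> (#|large_of_bins Lg bs| <= size bs)%N.
Proof.
elim: bs => [|B bs IH] le1; first by rewrite /large_of_bins big_nil cards0.
rewrite /large_of_bins big_cons cardsU; apply: leq_trans (leq_subr _ _) _.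
rewrite /= -add1n leq_add ?le1 ?mem_head // IH // => C C_bs.
by rewrite le1 // in_cons C_bs orbT.
Qed.

Lemma mixed_bins_matching n (s : 'I_n -> rat) (T : rat) (P : {set {set 'I_n}})
    (Lg : {set 'I_n}) (bs : seq {set 'I_n}) :
  trivIset P -> (forall B, B \in P -> load s B <= T) -> uniq bs -> {subset bs <= P} ->
  {in bs, forall B, #|B :&: Lg| = 1%N} ->
  exists ms, matching s T Lg (large_of_bins Lg bs) bs ms.
Proof.
move=> trivP loadP ubs bsP one_large.
case: bs => [|B0 bs] in ubs bsP one_large *; first by exists [::].
have /cards1P[x0 _] : #|B0 :&: Lg| == 1%N by rewrite one_large ?mem_head.
pose own B := odflt x0 [pick x in B :&: Lg].
have ownE B : B \in B0 :: bs -> B :&: Lg = [set own B].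
  move=> B_bs; have /cards1P[x Ex] : #|B :&: Lg| == 1%N by rewrite one_large.
  by rewrite /own Ex; case: pickP => [y|/(_ x)]; rewrite !inE ?eqxx // => /eqP->.
have own_in B : B \in B0 :: bs -> own B \in B :&: Lg by move/ownE->; rewrite set11.
exists (map own (B0 :: bs)); split.
- rewrite map_inj_in_uniq // => B C B_bs C_bs eq_own.
  have /setIP[iB _] := own_in B B_bs; have /setIP[iC _] := own_in C C_bs.
  rewrite eq_own in iB.
  by rewrite -(def_pblock trivP (bsP B B_bs) iB) (def_pblock trivP (bsP C C_bs) iC).
- by move=> _ /mapP[B B_bs ->]; apply/large_of_binsP; exists B; rewrite ?own_in.
- have : all (fun B => fits s T Lg B (own B)) (B0 :: bs).
    by apply/allP => B B_bs; rewrite fitsE ?ownE ?loadP ?bsP.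
  by elim: (B0 :: bs) => //= B bs' IH /andP[-> /IH].
Qed.

Theorem claim11 (n : nat) (s : 'I_n -> rat) (T : rat)
    (P : {set {set 'I_n}}) (Lg : {set 'I_n}) (bs : seq {set 'I_n}) :
  (forall i, 0 <= s i) ->
  is_optimal s T P ->
  is_large_set s T Lg ->
  uniq bs ->
  (forall B, (B \in bs) = (B \in P) && mixed_bin Lg B) ->
  (* in each step a greedy choice exists *)
  (forall xs, greedy_run s T Lg (large_of_bins Lg bs) bs xs ->
     (size xs < size bs)%N ->
     exists x, greedy_pick s T (large_of_bins Lg bs :\: [set x in xs])
                 (nth set0 bs (size xs) :\: Lg) x) /\
  (* every complete greedy run yields a feasible, optimal solution *)
  (forall xs, greedy_run s T Lg (large_of_bins Lg bs) bs xs ->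
     size xs = size bs ->
     is_optimal s T (repack P Lg bs xs)).
Proof.
move=> _ [[partP loadP] optP] _ ubs mixed.
have bsP : {subset bs <= P} by move=> B; rewrite mixed => /andP[].
have one_large : {in bs, forall B, #|B :&: Lg| = 1%N}.
  by move=> B; rewrite mixed => /andP[_ /andP[/eqP]].
split=> xs run_xs.
- have [ms M_ms] := mixed_bins_matching (partition_trivIset partP) loadP ubs bsP one_large.
  exact: greedy_run_extends M_ms run_xs.
- move=> size_xs; have [uxs sub_xs fits_xs] := greedy_run_matching run_xs size_xs.
  have xs_large : [set x in xs] = large_of_bins Lg bs.
    apply/eqP; rewrite eqEcard; apply/andP; split.
      by apply/subsetP => x; rewrite inE => /sub_xs.
    by rewrite cardsE (card_uniqP uxs) size_xs card_large_of_bins // => B /one_large->.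
  split; first split.
  + exact: repack_partition.
  + exact: repack_load.
  + by move=> P' /optP; apply: leq_trans (card_repack _ _ _ _).
Qed.
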